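(* Let $V$ be a countable set, $\Omega_0$ a finite set, $\Omega=\Omega_0^V$ with product $\sigma$-algebra $\mathcal F$, let $q\in\mathbb N$, and let $\Lambda\subset V$. Let $\gamma_\Lambda$ be a proper probability $q$-kernel. For $\eta\in\Omega$ put $\Omega_\Lambda^{\eta}=\{\sigma\in\Omega:\ \sigma_{\Lambda^c}=\eta_{\Lambda^c}\}$ and, for $\eta_1,\dots,\eta_q\in\Omega$, $\Omega_\Lambda^{\eta_1,\dots,\eta_q}=\bigcup_{i=1}^q\Omega_\Lambda^{\eta_i}$. Then for all $\eta_1,\dots,\eta_q\in\Omega$ the probability measure $\gamma_\Lambda(\cdot\mid\eta_1,\dots,\eta_q)$ is supported on $\Omega_\Lambda^{\eta_1,\dots,\eta_q}$, i.e. $\gamma_\Lambda(\Omega_\Lambda^{\eta_1,\dots,\eta_q}\mid\eta_1,\dots,\eta_q)=1$.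
   Context: For $\Delta\subset V$, $\mathcal F_\Delta$ denotes the $\sigma$-algebra on $\Omega$ generated by the coordinate maps $\sigma\mapsto\sigma_x$, $x\in\Delta$; $\sigma_\Delta$ denotes the restriction of $\sigma$ to $\Delta$. $\mathcal F^q=\mathcal F^{\otimes q}$ on $\Omega^q$ and $\mathcal F^q_{\Lambda^c}=(\mathcal F_{\Lambda^c})^{\otimes q}$. A probability $q$-kernel (from $\mathcal F^q_{\Lambda^c}$ to $\mathcal F$) is a map $\gamma_\Lambda:\mathcal F\times\Omega^q\to[0,1]$, $(A,(\eta_1,\dots,\eta_q))\mapsto\gamma_\Lambda(A\mid\eta_1,\dots,\eta_q)$, such that (i) $\gamma_\Lambda(\cdot\mid\eta_1,\dots,\eta_q)$ is a probability measure on $(\Omega,\mathcal F)$ for all $\eta_1,\dots,\eta_q\in\Omega$, and (ii) $\gamma_\Lambda(A\mid\cdot,\dots,\cdot)$ is $\mathcal F^q_{\Lambda^c}$-measurable for every $A\in\mathcal F$. It is proper if $\gamma_\Lambda(A\mid\eta_1,\dots,\eta_q)=\frac1q\sum_{i=1}^q\mathbf 1_A(\eta_i)$ for all $A\in\mathcal F_{\Lambda^c}$ and all $\eta_1,\dots,\eta_q$. *)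

From HB Require Import structures.
From mathcomp Require Import all_boot all_order all_algebra.
From mathcomp Require Import all_classical all_reals all_analysis.
From mathcomp Require Import measurable_realfun.
Set Implicit Arguments. Unset Strict Implicit. Unset Printing Implicit Defensive.
Import Order.TTheory GRing.Theory Num.Theory.
Local Open Scope classical_set_scope.
Local Open Scope ring_scope.

Definition config (V : Type) (O0 : Type) := V -> O0.

(* Generators of F_Delta: preimages of (arbitrary, Omega0 being finite and
   discrete) subsets of Omega0 under coordinate maps sigma |-> sigma_x, x in Delta. *)
Definition coord_gen (V O0 : Type) (Delta : set V) : set (set (config V O0)) :=
  [set A | exists x, Delta x /\ exists B : set O0, A = (fun s : config V O0 => s x) @^-1` B].

Definition F_ (V O0 : Type) (Delta : set V) : set (set (config V O0)) :=
  <<s @coord_gen V O0 Delta >>.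

Definition Omega (V : Type) (O0 : Type) := g_sigma_algebraType (@coord_gen V O0 setT).

(* Generators of F^q_Delta = (F_Delta)^{\otimes q} on Omega^q: preimages of
   F_Delta-sets under the projections (eta_1..eta_q) |-> eta_i. *)
Definition prod_gen (V O0 : Type) (q : nat) (Delta : set V)
  : set (set ('I_q -> config V O0)) :=
  [set E | exists i : 'I_q, exists A, @F_ V O0 Delta A /\
     E = (fun e : 'I_q -> config V O0 => e i) @^-1` A].

Definition Omegaq (V O0 : Type) (q : nat) (Delta : set V) :=
  g_sigma_algebraType (@prod_gen V O0 q Delta).

Definition OmegaL (V O0 : Type) (Lambda : set V) (eta : config V O0)
  : set (config V O0) :=
  [set s | forall x, (~` Lambda) x -> s x = eta x].

Definition OmegaLq (V O0 : Type) (q : nat) (Lambda : set V)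
  (etas : 'I_q -> config V O0) : set (config V O0) :=
  \bigcup_(i in [set: 'I_q]) OmegaL Lambda (etas i).

(* A probability q-kernel from F^q_{Lambda^c} to F: condition (i) is built into
   the type of gamma (each gamma etas is a probability on (Omega, F)); this is
   condition (ii). *)
Definition is_q_kernel (R : realType) (V : Type) (O0 : pointedType) (q : nat)
  (Lambda : set V) (gamma : ('I_q -> Omega V O0) -> probability (Omega V O0) R) :=
  forall A : set (Omega V O0), measurable A ->
    measurable_fun [set: @Omegaq V O0 q (~` Lambda)] (fun e => gamma e A).

Definition proper_kernel (R : realType) (V : Type) (O0 : pointedType) (q : nat)
  (Lambda : set V) (gamma : ('I_q -> Omega V O0) -> probability (Omega V O0) R) :=
  forall A : set (Omega V O0), @F_ V O0 (~` Lambda) A ->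
    forall etas : 'I_q -> Omega V O0,
      gamma etas A = ((q%:R)^-1 * \sum_(i < q) \1_A (etas i))%:E.

From HB Require Import structures.
From mathcomp Require Import all_boot all_order all_algebra.
From mathcomp Require Import all_classical all_reals all_analysis.
From mathcomp Require Import measurable_realfun.
Set Implicit Arguments. Unset Strict Implicit. Unset Printing Implicit Defensive.
Import GRing.Theory Num.Theory.
Local Open Scope classical_set_scope.
Local Open Scope ring_scope.

(* Omega_Lambda^eta is the countable intersection over x outside Lambda of the
   cylinders {s | s x = eta x}, so Omega_Lambda^{eta_1,...,eta_q} lies in
   F_{Lambda^c}.  Properness then gives it the mass (1/q) * #{i | eta_i in it},
   which is 1 because every eta_i lies in its own Omega_Lambda^{eta_i}. *)

Lemma countable_bigcap_measurable d (T : measurableType d) (I : countType)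
    (D : set I) (F : I -> set T) :
  (forall i, D i -> measurable (F i)) -> measurable (\bigcap_(i in D) F i).
Proof.
move=> mF; rewrite -[X in measurable X]setCK setC_bigcap bigcup_mkcond.
apply/measurableC/countable_bigcupT_measurable; first exact: countableP.
by move=> i; case: ifPn => // /set_mem /mF /measurableC.
Qed.

Lemma F_coord_preimage (V O0 : Type) (Delta : set V) (x : V) (B : set O0) :
  Delta x -> F_ Delta ((fun s : config V O0 => s x) @^-1` B).
Proof. by move=> Dx; apply: sub_sigma_algebra; exists x; split => //; exists B. Qed.

Lemma OmegaLE (V O0 : Type) (Lambda : set V) (eta : config V O0) :
  OmegaL Lambda eta =
  \bigcap_(x in ~` Lambda) (fun s : config V O0 => s x) @^-1` [set eta x].
Proof. by apply/seteqP; split => s hs x /hs. Qed.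

Lemma F_OmegaL (V : countType) (O0 : pointedType) (Lambda : set V)
    (eta : config V O0) :
  F_ (~` Lambda) (OmegaL Lambda eta).
Proof.
rewrite OmegaLE.
apply: (@countable_bigcap_measurable _
  (g_sigma_algebraType (@coord_gen V O0 (~` Lambda))) V) => x Lx.
exact: F_coord_preimage.
Qed.

Lemma F_OmegaLq (V : countType) (O0 : pointedType) (q : nat) (Lambda : set V)
    (etas : 'I_q -> config V O0) :
  F_ (~` Lambda) (OmegaLq Lambda etas).
Proof.
apply: (@countable_bigcupT_measurable _
  (g_sigma_algebraType (@coord_gen V O0 (~` Lambda)))).
  exact: countableP.
by move=> i; exact: F_OmegaL.
Qed.

Lemma proper_kernel_eq1 (R : realType) (V : Type) (O0 : pointedType) (q : nat)
    (Lambda : set V) (gamma : ('I_q -> Omega V O0) -> probability (Omega V O0) R)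
    (A : set (Omega V O0)) (etas : 'I_q -> Omega V O0) :
  (0 < q)%N -> proper_kernel Lambda gamma ->
  F_ (~` Lambda) A -> (forall i, A (etas i)) -> gamma etas A = 1%E.
Proof.
move=> q_gt0 hprop FA Aetas; rewrite hprop //.
under eq_bigr => i _ do rewrite indicE mem_set //.
by rewrite sumr_const card_ord mulVf // pnatr_eq0 -lt0n.
Qed.

Theorem mainTheorem1 (R : realType) (V : countType) (O0 : pointedType)
  (hO0 : finite_set [set: O0]) (q : nat) (hq : (0 < q)%N) (Lambda : set V)
  (gamma : ('I_q -> Omega V O0) -> probability (Omega V O0) R)
  (hker : is_q_kernel Lambda gamma) (hprop : proper_kernel Lambda gamma) :
  forall etas : 'I_q -> Omega V O0, gamma etas (OmegaLq Lambda etas) = 1%E.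
Proof.
move=> etas; apply: (proper_kernel_eq1 hq hprop); first exact: F_OmegaLq.
by move=> i; exists i.
Qed.
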